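(* For every fixed $n\ge1$, the function $f(x)=\mu(N_n(x)\ge1)$, $x\in\mathbb{N}$, is non-increasing in $x$.
   Context: $\mu$ is the Gauss measure on $(0,1)$, $d\mu(\omega)=\frac{d\omega}{(\log 2)(1+\omega)}$. For irrational $\omega\in(0,1)$, $a_i(\omega)$ denote its continued fraction partial quotients, and $N_n(x)=N_n(x,\omega)=\#\{1\le i\le n: a_i(\omega)=x\}$. *)

From HB Require Import structures.
From mathcomp Require Import all_boot all_order all_algebra.
From mathcomp Require Import all_classical all_reals all_analysis.
Set Implicit Arguments. Unset Strict Implicit. Unset Printing Implicit Defensive.
Import Order.TTheory GRing.Theory Num.Theory.
Import numFieldNormedType.Exports.
Local Open Scope classical_set_scope.
Local Open Scope ring_scope.

Section Defs.
Variable R : realType.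

Definition gauss_map (w : R) : R := w^-1 - (Num.floor (w^-1))%:~R.

(* partial quotients: a_i(w) = floor (1 / T^{i-1} w), for i >= 1 *)
Definition pq (i : nat) (w : R) : int := Num.floor ((iter i.-1 gauss_map w)^-1).

Definition irrational (w : R) : Prop := ~ exists q : rat, w = ratr q.

Definition Ncount (n x : nat) (w : R) : nat :=
  count (fun i => pq i w == x%:Z) (iota 1 n).

Definition gauss_mu (A : set R) : \bar R :=
  (\int[lebesgue_measure]_(w in A `&` `]0%R, 1%R[) ((ln 2 * (1 + w))^-1)%:E)%E.

Definition Nge1 (n x : nat) : set R :=
  [set w | 0 < w < 1 /\ irrational w /\ (1 <= Ncount n x w)%N].

End Defs.

From Pilot Require Import Defs.
From HB Require Import structures.
From mathcomp Require Import all_boot all_order all_algebra.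
From mathcomp Require Import all_classical all_reals all_analysis.
From mathcomp Require Import measurable_realfun ring lra.
Import Order.TTheory GRing.Theory Num.Theory.
Import numFieldNormedType.Exports.
Local Open Scope classical_set_scope.
Local Open Scope ring_scope.

(* For a density of the form t |-> ((A + B t) (C + E t))^-1 on (0, 1), the points
   with first digit a are the image of (0, 1) under t |-> 1 / (a + t), and pulling
   the density back along this branch gives a density of the same form, with
   parameters (aA + B, A, aC + E, C), pointwise non-increasing in a.  The Gauss
   density is the case (ln 2, ln 2, 1, 0).  Let m_q(P) be the mass under q of the
   points whose first n digits satisfy P.  One shows m_q(y occurs) <= m_q(x occurs)
   for 1 <= x <= y and every such q, by induction on n, splitting according to the
   first digit.  Digits other than x and y are handled by induction; for the two
   remaining terms one needs m_{q_y}(all) + m_{q_x}(y occurs) <= m_{q_y}(x occurs)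
   + m_{q_x}(all), i.e. m_{q_y}(x absent) <= m_{q_x}(y absent), which follows from
   the induction hypothesis at q_y and from q_y <= q_x. *)

Section Digits.
Context {R : realType}.
Implicit Types (w t : R) (v : seq nat).
Local Notation T := (@gauss_map R).

Definition irr01 : set R := [set w | 0 < w < 1 /\ Defs.irrational w].
Definition digit w : nat := `|Num.floor w^-1|%N.
Definition digits (m : nat) w : seq nat := [seq digit (iter i T w) | i <- iota 0 m].

Lemma irrationalV w : Defs.irrational w -> Defs.irrational w^-1.
Proof.
by rewrite /Defs.irrational => Hw [q Hq]; apply: Hw; exists q^-1; rewrite fmorphV /= -Hq invrK.
Qed.

Lemma irrationalDz w (k : int) : Defs.irrational w -> Defs.irrational (w + k%:~R).
Proof.
rewrite /Defs.irrational => Hw [q Hq]; apply: Hw; exists (q - k%:~R).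
by rewrite rmorphB /= -Hq rmorph_int addrK.
Qed.

Lemma irr01_floor_ge1 w : irr01 w -> 1 <= Num.floor w^-1.
Proof. by move=> [/andP[w0 w1] _]; rewrite floor_ge_int invf_ge1 // ltW. Qed.

Lemma digitE w : irr01 w -> (digit w)%:Z = Num.floor w^-1.
Proof. by move=> /irr01_floor_ge1 h; rewrite /digit gez0_abs // (le_trans _ h). Qed.

Lemma digit_gt0 w : irr01 w -> (0 < digit w)%N.
Proof. by move=> /irr01_floor_ge1 h; rewrite /digit absz_gt0 gt_eqF // (lt_le_trans _ h). Qed.

Lemma irr01_gauss_map w : irr01 w -> irr01 (T w).
Proof.
move=> [w01 iw]; have /andP[h1 h2] := floor_itv w^-1; rewrite /gauss_map; split.
  apply/andP; split; last by rewrite ltrBlDl; rewrite intrD in h2.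
  rewrite subr_gt0 lt_neqAle h1 andbT; apply/negP => /eqP E.
  by case: (irrationalV _ iw); exists (Num.floor w^-1)%:~R; rewrite rmorph_int E.
by rewrite -intrN; exact/irrationalDz/irrationalV.
Qed.

Lemma irr01_iter_gauss_map w i : irr01 w -> irr01 (iter i T w).
Proof. by move=> Uw; elim: i => //= i; exact: irr01_gauss_map. Qed.

Lemma pq_digit w i : irr01 w -> pq i.+1 w = (digit (iter i T w))%:Z.
Proof. by move=> Uw; rewrite digitE //; exact: irr01_iter_gauss_map. Qed.

Lemma Ncount_ge1 n x w : irr01 w -> (1 <= Ncount n x w)%N = (x \in digits n w).
Proof.
move=> Uw; rewrite /Ncount (iotaDl 1 0) count_map -has_pred1 has_count count_map.
by congr (0 < _)%N; apply: eq_count => i /=; rewrite add1n pq_digit.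
Qed.

Lemma digitsS n w : digits n.+1 w = digit w :: digits n (T w).
Proof.
rewrite /digits /= (iotaDl 1 0) -map_comp; congr (_ :: _); apply: eq_map => i /=.
by rewrite add0n -iterS iterSr.
Qed.

Lemma digitsSr n w : digits n.+1 w = rcons (digits n w) (digit (iter n T w)).
Proof. by rewrite /digits -addn1 iotaD map_cat cats1. Qed.

Lemma digit_gauss_map_itv w (a : nat) (c d : R) : (0 < a)%N -> 0 <= c -> 0 <= d ->
  d <= 1 ->
  irr01 w -> ((digit w == a) && (c < T w < d)) = ((a%:R + d)^-1 < w < (a%:R + c)^-1).
Proof.
move=> a0 c0 d0 d1 Uw; have [/andP[w0 w1] _] := Uw.
have aR : 1 <= a%:R :> R by rewrite ler1n.
have ac : 0 < a%:R + c by lra.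
have ad : 0 < a%:R + d by lra.
have dw : (digit w)%:R = (Num.floor w^-1)%:~R :> R by rewrite -digitE.
rewrite invf_plt ?posrE // invf_pgt ?posrE // /gauss_map -dw; apply/idP/idP.
  move=> /andP[/eqP da /andP[h1 h2]]; move: h1 h2; rewrite da => h1 h2.
  by apply/andP; split; lra.
move=> /andP[h1 h2].
have /eqP Fa : Num.floor w^-1 == a%:Z.
  by rewrite floor_eq intrD; apply/andP; split; rewrite -[_%:~R]/(a%:R); lra.
have da : digit w = a by rewrite /digit Fa.
by rewrite da eqxx; apply/andP; split; lra.
Qed.

Definition cylinder v : set R := [set t | irr01 t /\ digits (size v) t = v].

Definition cylinder_event v (n : nat) (P : pred (seq nat)) : set R :=
  [set t | irr01 t /\ digits (size v) t = v /\ P (digits n (iter (size v) T t))].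

Lemma cylinder_nil : cylinder [::] = irr01.
Proof. by apply/seteqP; split => t /=; [case|]. Qed.

Lemma cylinder_event0 v P : cylinder_event v 0 P = if P [::] then cylinder v else set0.
Proof.
case: ifP => P0; apply/seteqP; split => t //=.
- by case=> Ut [dv _].
- by case=> Ut dv; split => //; split.
- by case=> _ [_]; rewrite /= P0.
Qed.

Lemma cylinder_eventS v n P : cylinder_event v n.+1 P =
  \bigcup_k cylinder_event (rcons v k.+1) n (fun s => P (k.+1 :: s)).
Proof.
apply/seteqP; split => t /=.
  move=> [Ut [dv Pt]]; have d0 := digit_gt0 _ (irr01_iter_gauss_map _ (size v) Ut).
  exists (digit (iter (size v) T t)).-1 => //.
  rewrite prednK // /cylinder_event /= size_rcons digitsSr dv iterS; split => //; split => //.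
  by rewrite digitsS in Pt.
move=> [k _ [Ut []]]; rewrite size_rcons digitsSr => /eqP; rewrite eqseq_rcons.
move=> /andP[/eqP dv /eqP dk] Pt; split => //; split => //.
by rewrite digitsS -iterS dk.
Qed.

Lemma trivIset_cylinder_eventS v n P :
  trivIset setT (fun k => cylinder_event (rcons v k.+1) n (fun s => P (k.+1 :: s))).
Proof.
apply/trivIsetP => i j _ _ ij; apply/seteqP; split => // t [[_ [+ _]] [_ [+ _]]].
rewrite !size_rcons => -> /eqP; rewrite eqseq_rcons eqxx /= => /eqP [] ji.
by move: ij; rewrite ji eqxx.
Qed.

Lemma Nge1_cylinder_event n x : Nge1 n x = cylinder_event [::] n (fun s => x \in s).
Proof.
apply/seteqP; split => t /=.
  by move=> [t01 [it c]]; have Ut : irr01 t by []; rewrite /cylinder_event /= -Ncount_ge1.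
by move=> [Ut [_ c]]; case: (Ut) => t01 it; split => //; split => //; rewrite Ncount_ge1.
Qed.

Lemma cylinder_cons_itv (a : nat) v (c d : R) : (0 < a)%N -> 0 <= c -> 0 <= d -> d <= 1 ->
  cylinder v = irr01 `&` `]c, d[ ->
  cylinder (a :: v) = irr01 `&` `](a%:R + d)^-1, (a%:R + c)^-1[.
Proof.
move=> a0 c0 d0 d1 Cv; apply/seteqP; split => t /=.
  move=> [Ut]; rewrite digitsS => -[da dv]; split => //.
  have : cylinder v (T t) by split => //; exact: irr01_gauss_map.
  rewrite Cv => -[_]; rewrite /= !in_itv /= => cd.
  by rewrite -digit_gauss_map_itv // da eqxx cd.
move=> [Ut]; rewrite in_itv /= -digit_gauss_map_itv // => /andP[/eqP da cd].
split => //; rewrite digitsS da; congr (_ :: _).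
have : (irr01 `&` `]c, d[) (T t) by split; [exact: irr01_gauss_map | rewrite /= in_itv].
by rewrite -Cv => -[].
Qed.

Lemma cylinder_itv v : all (fun a => 0 < a)%N v -> exists c d : R,
  [/\ 0 <= c, c < d, d <= 1 & cylinder v = irr01 `&` `]c, d[].
Proof.
elim: v => [|a v IH] /=.
  exists 0, 1; split => //; rewrite cylinder_nil setIidl // => t [/andP[t0 t1] _].
  by rewrite /= in_itv /= t0 t1.
move=> /andP[a0 /IH [c [d [c0 cd d1 Cv]]]].
have aR : 1 <= a%:R :> R by rewrite ler1n.
exists (a%:R + d)^-1, (a%:R + c)^-1; split.
- by rewrite invr_ge0; lra.
- by rewrite ltf_pV2 ?posrE; lra.
- by rewrite invf_le1; lra.
- by apply: cylinder_cons_itv => //; lra.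
Qed.

End Digits.

Section Density.
Context {R : realType}.

Record dparam := DParam { dA : R; dB : R; dC : R; dE : R }.

(* The absolute values make the density continuous and positive on all of R;
   only its values on (0, 1) matter. *)
Definition density (p : dparam) (t : R) : R :=
  ((dA p + dB p * `|t|) * (dC p + dE p * `|t|))^-1.

Definition admissible (p : dparam) : Prop :=
  [/\ 0 < dA p, 0 <= dB p, 0 < dC p & 0 <= dE p].

Definition branch (p : dparam) (a : nat) : dparam :=
  DParam (a%:R * dA p + dB p) (dA p) (a%:R * dC p + dE p) (dC p).

Lemma admissible_branch p a : (0 < a)%N -> admissible p -> admissible (branch p a).
Proof.
case: p => A B C E a0 [/= A0 B0 C0 E0]; have aR : 1 <= a%:R :> R by rewrite ler1n.
have hA : A <= a%:R * A by rewrite ler_peMl // ltW.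
have hC : C <= a%:R * C by rewrite ler_peMl // ltW.
by split => /=; lra.
Qed.

Lemma density_gt0 p t : admissible p -> 0 < density p t.
Proof.
case: p => A B C E [/= A0 B0 C0 E0].
have h1 : 0 <= B * `|t| by apply: mulr_ge0.
have h2 : 0 <= E * `|t| by apply: mulr_ge0.
by rewrite /density /= invr_gt0 mulr_gt0 //; lra.
Qed.

Lemma density_le p t : admissible p -> density p t <= (dA p * dC p)^-1.
Proof.
case: p => A B C E [/= A0 B0 C0 E0].
have h1 : 0 <= B * `|t| by apply: mulr_ge0.
have h2 : 0 <= E * `|t| by apply: mulr_ge0.
rewrite /density /= lef_pV2 ?posrE ?mulr_gt0 //; try lra.
by apply: ler_pM; lra.
Qed.

Lemma continuous_density p : admissible p -> continuous (density p).
Proof.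
move=> pa x; have hx := density_gt0 p x pa.
apply: (@continuousV _ _ (fun t => (dA p + dB p * `|t|) * (dC p + dE p * `|t|))).
  by rewrite -invr_eq0 gt_eqF.
have affine_norm (c e : R) : {for x, continuous (fun t : R => c + e * `|t|)}.
  apply: (@continuousD _ _ _ (cst c) (fun t : R => e * `|t|)); first exact: cst_continuous.
  apply: (@continuousM _ _ (cst e) (@Num.Def.normr _ R)); first exact: cst_continuous.
  exact: norm_continuous.
exact: (@continuousM _ _ (fun t => dA p + dB p * `|t|) (fun t => dC p + dE p * `|t|)).
Qed.

Lemma density_branch p (a : nat) t : (0 < a)%N -> admissible p -> 0 <= t ->
  density (branch p a) t = density p (a%:R + t)^-1 * ((a%:R + t) ^+ 2)^-1.
Proof.
case: p => A B C E a0 [/= A0 B0 C0 E0] t0; have aR : 1 <= a%:R :> R by rewrite ler1n.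
have at0 : 0 < a%:R + t by lra.
rewrite /density /= (ger0_norm t0) ger0_norm ?invr_ge0 ?ltW // -!invfM.
by congr (_^-1); field; lra.
Qed.

Lemma density_branch_le p (x y : nat) t : (0 < x)%N -> (x <= y)%N -> admissible p ->
  0 <= t -> density (branch p y) t <= density (branch p x) t.
Proof.
case: p => A B C E x0 xy [/= A0 B0 C0 E0] t0.
have xR : 1 <= x%:R :> R by rewrite ler1n.
have yR : x%:R <= y%:R :> R by rewrite ler_nat.
rewrite /density /= (ger0_norm t0).
have h1 : x%:R * A <= y%:R * A by apply: ler_wpM2r; lra.
have h2 : x%:R * C <= y%:R * C by apply: ler_wpM2r; lra.
have h3 : A <= x%:R * A by nra.
have h4 : C <= x%:R * C by nra.
have h5 : 0 <= A * t by apply: mulr_ge0; lra.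
have h6 : 0 <= C * t by apply: mulr_ge0; lra.
rewrite lef_pV2 ?posrE ?mulr_gt0 //; try lra.
by apply: ler_pM; lra.
Qed.

End Density.

Arguments dparam : clear implicits.

Section InverseBranch.
Context {R : realType}.
Local Notation mu := (@lebesgue_measure R).

Definition inv_shift (a : nat) (t : R) : R := (a%:R + t)^-1.

Lemma is_derive_inv_shift (a : nat) (x : R) : - a%:R < x ->
  is_derive x 1 (inv_shift a) (- inv_shift a x ^+ 2).
Proof.
move=> ax; have ax0 : a%:R + x != 0 by rewrite gt_eqF //; lra.
have shift : is_derive x (1 : R) (fun t : R => a%:R + t) 1.
  by rewrite -[X in is_derive _ _ _ X]add0r; apply: is_deriveD.
have := is_deriveV ax0 shift.
by rewrite /inv_shift exprVn /GRing.scale /= mulr1.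
Qed.

Lemma derive1_inv_shift (a : nat) (x : R) : - a%:R < x ->
  (inv_shift a)^`()%classic x = - inv_shift a x ^+ 2.
Proof. by move=> /is_derive_inv_shift d; rewrite derive1E derive_val. Qed.

Lemma continuous_inv_shift (a : nat) (x : R) : - a%:R < x -> {for x, continuous (inv_shift a)}.
Proof.
move=> ax; apply: (@continuousV _ _ (fun t : R => a%:R + t)); first by rewrite gt_eqF //; lra.
by apply: cvgD; [exact: cvg_cst | exact: cvg_id].
Qed.

Lemma continuous_derive1_inv_shift (a : nat) (x : R) : - a%:R < x ->
  {for x, continuous (inv_shift a)^`()%classic}.
Proof.
move=> ax.
have near_eq : \forall y \near x, - inv_shift a y ^+ 2 = (inv_shift a)^`()%classic y.
  by near=> y; rewrite derive1_inv_shift //; near: y; exact: lt_nbhsr.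
have : {for x, continuous (fun y => - inv_shift a y ^+ 2)}.
  apply: continuousN.
  exact: (continuousM (continuous_inv_shift _ _ ax) (continuous_inv_shift _ _ ax)).
rewrite /prop_for /continuous_at derive1_inv_shift // => h.
apply: cvg_trans h; exact: near_eq_cvg near_eq.
Unshelve. all: by end_near.
Qed.

Lemma measurable_density (q : dparam R) (D : set R) : admissible q ->
  measurable_fun D (fun x => (density q x)%:E).
Proof.
move=> qa; apply/measurable_EFinP/measurable_funTS.
by apply: continuous_measurable_fun; exact: continuous_density.
Qed.

Lemma integral_inv_shift (p : dparam R) (a : nat) (c d : R) :
  (0 < a)%N -> admissible p -> 0 <= c -> c < d ->
  (\int[mu]_(x in `](a%:R + d)^-1%R, (a%:R + c)^-1%R[) (density p x)%:E =
   \int[mu]_(x in `]c, d[) (density (branch p a) x)%:E)%E.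
Proof.
move=> a0 pa c0 cd; have aR : 1 <= a%:R :> R by rewrite ler1n.
have ac : - a%:R < c by lra.
rewrite -[RHS](@integral_itv_bndoo _ _ _ _ true false); last first.
  by apply: measurable_density; exact: admissible_branch.
rewrite -[LHS](@integral_itv_bndoo _ _ _ _ true false); last exact: measurable_density.
rewrite -[(a%:R + d)^-1]/(inv_shift a d) -[(a%:R + c)^-1]/(inv_shift a c).
rewrite (integration_by_substitution_decreasing (ltW cd)); last 6 first.
- move=> x y; rewrite !in_itv /= => /andP[cx _] /andP[cy _] xy.
  by rewrite /inv_shift ltf_pV2 ?posrE; lra.
- by move=> x; rewrite in_itv /= => /andP[cx _]; apply: continuous_derive1_inv_shift; lra.
- apply: (cvgP ((inv_shift a)^`()%classic c)); apply: cvg_at_right_filter.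
  exact: continuous_derive1_inv_shift.
- apply: (cvgP ((inv_shift a)^`()%classic d)); apply: cvg_at_left_filter.
  by apply: continuous_derive1_inv_shift; lra.
- split.
  + move=> x; rewrite in_itv /= => /andP[cx _].
    by have /(is_derive_inv_shift a) [] : - a%:R < x by lra.
  + by apply: cvg_at_right_filter; exact: continuous_inv_shift.
  + by apply: cvg_at_left_filter; apply: continuous_inv_shift; lra.
- by apply: continuous_subspaceT; exact: continuous_density.
apply: eq_integral => x; rewrite inE /= in_itv /= => /andP[cx _].
congr (_%:E); rewrite !fctE derive1_inv_shift; last by lra.
by rewrite opprK density_branch ?exprVn //; lra.
Qed.

End InverseBranch.

Section Mass.
Context {R : realType}.
Local Notation mu := (@lebesgue_measure R).
Implicit Types (q : dparam R) (v : seq nat) (P : pred (seq nat)).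

Definition rationals : set R := range ratr.

Lemma countable_rationals : countable rationals.
Proof. exact: (card_le_trans (card_image_le _ _) (countableP _)). Qed.

Lemma measurable_rationals : measurable rationals.
Proof. by apply: countable_measurable => //; exact: countable_rationals. Qed.

Lemma irr01_itvE (c d : R) : 0 <= c -> d <= 1 -> irr01 `&` `]c, d[ = `]c, d[ `\` rationals.
Proof.
move=> c0 d1; apply/seteqP; split => t /=.
  by move=> [[_ it] ct]; split => // -[q _ qt]; apply: it; exists q.
move=> [+ nq]; rewrite /= in_itv /= => /andP[ct td].
split; last by apply/andP.
by split; [apply/andP; split; lra | move=> [q tq]; apply: nq; exists q].
Qed.

Lemma measurable_irr01_itv (c d : R) : 0 <= c -> d <= 1 -> measurable (irr01 `&` `]c, d[).
Proof. by move=> c0 d1; rewrite irr01_itvE //; exact: measurableD measurable_rationals. Qed.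

Lemma integral_irr01_itv (c d : R) q : 0 <= c -> d <= 1 -> admissible q ->
  (\int[mu]_(x in irr01 `&` `]c, d[) (density q x)%:E =
   \int[mu]_(x in `]c, d[) (density q x)%:E)%E.
Proof.
move=> c0 d1 qa; rewrite irr01_itvE //; apply/esym/ge0_negligible_integral => //.
- exact: measurable_rationals.
- exact: measurable_density.
- by move=> x _; rewrite lee_fin ltW // density_gt0.
- exact: countable_lebesgue_measure0 countable_rationals.
Qed.

Lemma measurable_cylinder v : all (fun a => 0 < a)%N v -> measurable (@cylinder R v).
Proof.
move=> av; have [c [d [c0 _ d1 ->]]] := cylinder_itv (R:=R) _ av.
exact: measurable_irr01_itv.
Qed.

Lemma measurable_irr01 : measurable (@irr01 R).
Proof. by rewrite -cylinder_nil; exact: measurable_cylinder. Qed.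

Lemma measurable_cylinder_event v n P :
  all (fun a => 0 < a)%N v -> measurable (@cylinder_event R v n P).
Proof.
elim: n v P => [|n IH] v P av.
  by rewrite cylinder_event0; case: ifP => // _; exact: measurable_cylinder.
rewrite cylinder_eventS; apply: bigcupT_measurable => k; apply: IH.
by rewrite all_rcons av.
Qed.

Lemma integral_cylinder v q : all (fun a => 0 < a)%N v -> admissible q ->
  (\int[mu]_(x in cylinder v) (density q x)%:E =
   \int[mu]_(x in irr01) (density (foldl branch q v) x)%:E)%E.
Proof.
elim: v q => [|a v IH] q /=; first by rewrite cylinder_nil.
move=> /andP[a0 av] qa; have [c [d [c0 cd d1 Cv]]] := cylinder_itv (R:=R) _ av.
have aR : 1 <= a%:R :> R by rewrite ler1n.
rewrite (cylinder_cons_itv a v c d a0 c0 _ d1 Cv); last by lra.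
rewrite integral_irr01_itv //; last 2 first.
- by rewrite invr_ge0; lra.
- by rewrite invf_le1; lra.
rewrite integral_inv_shift // -integral_irr01_itv //; last exact: admissible_branch.
by rewrite -Cv IH //; exact: admissible_branch.
Qed.

Definition total_mass q : \bar R := (\int[mu]_(x in irr01) (density q x)%:E)%E.

(* The integral of [density q] over the points whose first n digits satisfy P
   (see [massE]), computed by splitting along the first digit. *)
Fixpoint mass n q P : \bar R :=
  if n is n'.+1 then (\sum_(k <oo) mass n' (branch q k.+1) (fun s => P (k.+1 :: s)))%E
  else if P [::] then total_mass q else 0%E.

Lemma integral_cylinder_event v n P q : all (fun a => 0 < a)%N v -> admissible q ->
  (\int[mu]_(x in cylinder_event v n P) (density q x)%:E)%E = mass n (foldl branch q v) P.
Proof.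
elim: n v P => [|n IH] v P av qa /=.
  rewrite cylinder_event0; case: ifP => _; first exact: integral_cylinder.
  exact: integral_set0.
rewrite cylinder_eventS ge0_integral_bigcup //; last 4 first.
- by move=> k; apply: measurable_cylinder_event; rewrite all_rcons av.
- exact: measurable_density.
- by move=> x _; rewrite lee_fin ltW // density_gt0.
- exact: trivIset_cylinder_eventS.
apply: congr_lim; apply/funext => N; apply: eq_bigr => k _.
by rewrite IH ?all_rcons ?av // foldl_rcons.
Qed.

Lemma massE n q P : admissible q ->
  mass n q P = (\int[mu]_(x in cylinder_event [::] n P) (density q x)%:E)%E.
Proof. by move=> qa; rewrite integral_cylinder_event. Qed.

End Mass.

Section ExtendedReals.
Context {R : realType}.
Local Open Scope ereal_scope.

Lemma lee_of_eq_adde (a b c d : \bar R) : a \is a fin_num -> b \is a fin_num ->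
  c \is a fin_num -> d \is a fin_num -> a + b = c + d -> a <= c -> d <= b.
Proof.
move: a b c d => [a| |] [b| |] [c| |] [d| |] //= _ _ _ _.
by rewrite -!EFinD => -[h]; rewrite !lee_fin; lra.
Qed.

Lemma nneseries_le_pair (f g : nat -> \bar R) (i j : nat) : i != j ->
  (forall k, 0 <= f k) -> (forall k, 0 <= g k) -> f i + f j <= g i + g j ->
  (forall k, k != i -> k != j -> f k <= g k) ->
  \sum_(k <oo) f k <= \sum_(k <oo) g k.
Proof.
move=> ij f0 g0 fg_ij fg.
rewrite (@nneseriesD1 _ f i xpredT) // (@nneseriesD1 _ g i xpredT) //.
rewrite (@nneseriesD1 _ f j) 1?eq_sym // (@nneseriesD1 _ g j) 1?eq_sym // !addeA.
apply: leeD => //; apply: lee_nneseries => [k _ _|k /andP[ki kj]]; first exact: f0.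
exact: fg.
Qed.

End ExtendedReals.

Section Monotonicity.
Context {R : realType}.
Local Notation mu := (@lebesgue_measure R).
Local Open Scope ereal_scope.
Implicit Types (q : dparam R) (P : pred (seq nat)).

Lemma total_mass_ge0 q : admissible q -> 0 <= total_mass q.
Proof. by move=> qa; apply: integral_ge0 => x _; rewrite lee_fin ltW // density_gt0. Qed.

Lemma total_mass_fin q : admissible q -> total_mass q \is a fin_num.
Proof.
move=> qa; rewrite ge0_fin_numE ?total_mass_ge0 //.
apply: (@le_lt_trans _ _ (\int[mu]_(x in `]0%R, 1%R[) ((dA q * dC q)^-1)%:E)).
  apply: (@le_trans _ _ (\int[mu]_(x in irr01) ((dA q * dC q)^-1)%:E)).
    apply: ge0_le_integral => //; first exact: measurable_irr01.
    - by move=> x _; rewrite lee_fin ltW // density_gt0.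
    - exact: measurable_density.
    - by move=> x _; rewrite lee_fin density_le.
  apply: ge0_subset_integral => //; first exact: measurable_irr01.
  - by case: qa => A0 _ C0 _ x _; rewrite lee_fin invr_ge0 ltW // mulr_gt0.
  - by move=> x [/andP[x0 x1] _]; rewrite /= in_itv /= x0 x1.
by rewrite integral_cst //= lebesgue_measure_itv /= lte_fin ltr01 oppr0 adde0 -EFinM ltry.
Qed.

Lemma mass_ge0 n q P : admissible q -> 0 <= mass n q P.
Proof.
by move=> qa; rewrite massE //; apply: integral_ge0 => x _; rewrite lee_fin ltW // density_gt0.
Qed.

Lemma mass_predC n q P : admissible q ->
  mass n q P + mass n q (predC P) = total_mass q.
Proof.
move=> qa; rewrite !massE // -ge0_integral_setU //.
- congr (integral _ _ _); apply/seteqP; split => t; first by case => -[].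
  by move=> Ut; case: (boolP (P (digits n t))) => Pt; [left | right].
- exact: measurable_cylinder_event.
- exact: measurable_cylinder_event.
- exact: measurable_density.
- by move=> x _; rewrite lee_fin ltW // density_gt0.
- rewrite disj_set2E; apply/eqP/seteqP; split => // t [[_ [_ h1]] [_ [_ h2]]].
  by move: h2; rewrite /= h1.
Qed.

Lemma mass_fin n q P : admissible q -> mass n q P \is a fin_num.
Proof.
move=> qa; rewrite ge0_fin_numE ?mass_ge0 //.
apply: (@le_lt_trans _ _ (total_mass q)); last by rewrite ltey_eq total_mass_fin.
by rewrite -(mass_predC n q P qa) leeDl // mass_ge0.
Qed.

Lemma le_mass n q q' P : admissible q -> admissible q' ->
  (forall t, 0 <= t -> density q' t <= density q t)%R -> mass n q' P <= mass n q P.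
Proof.
move=> qa q'a le_qq'; rewrite !massE //; apply: ge0_le_integral => //.
- exact: measurable_cylinder_event.
- by move=> x _; rewrite lee_fin ltW // density_gt0.
- exact: measurable_density.
- exact: measurable_density.
- by move=> x [[/andP[/ltW x0 _] _] _]; rewrite lee_fin le_qq'.
Qed.

Lemma eq_mass n q P Q : P =1 Q -> mass n q P = mass n q Q.
Proof.
elim: n q P Q => [|n IH] q P Q PQ /=; first by rewrite PQ.
by apply: congr_lim; apply/funext => N; apply: eq_bigr => k _; apply: IH => s.
Qed.

Lemma mass_predT n q P : admissible q -> P =1 predT -> mass n q P = total_mass q.
Proof.
move=> qa PT; rewrite massE //; congr (integral _ _ _); apply/seteqP; split => t.
  by case.
by move=> Ut; split => //; split => //; rewrite PT.
Qed.

Lemma massS_mem n q z : admissible q ->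
  mass n.+1 q (fun s => z \in s) =
  \sum_(k <oo) (if k.+1 == z then total_mass (branch q k.+1)
                 else mass n (branch q k.+1) (fun s => z \in s)).
Proof.
move=> qa /=; apply: congr_lim; apply/funext => N; apply: eq_bigr => k _.
case: eqP => [<-|kz].
  by apply: mass_predT; [exact: admissible_branch | move=> s; rewrite in_cons eqxx].
by apply: eq_mass => s; rewrite in_cons; case: eqP => // zk; case: kz.
Qed.

Lemma mass_exchange n q q' P Q : admissible q -> admissible q' ->
  (forall t, 0 <= t -> density q' t <= density q t)%R -> mass n q' Q <= mass n q' P ->
  total_mass q' + mass n q Q <= mass n q' P + total_mass q.
Proof.
move=> qa q'a le_qq' le_QP; rewrite -(mass_predC n q' P q'a) -(mass_predC n q Q qa).
have le_predC : mass n q' (predC P) <= mass n q' (predC Q).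
  by apply: (@lee_of_eq_adde _ (mass n q' Q) _ (mass n q' P)); rewrite ?mass_fin ?mass_predC.
rewrite -addeA leeD2l ?mass_fin // addeC leeD2l ?mass_fin //.
exact: le_trans le_predC (le_mass _ _ _ _ qa q'a le_qq').
Qed.

Lemma mass_mem_le n (x y : nat) q : (0 < x)%N -> (x <= y)%N -> admissible q ->
  mass n q (fun s => y \in s) <= mass n q (fun s => x \in s).
Proof.
move=> x0 xy; have [<-//|nxy] := eqVneq x y.
have y0 : (0 < y)%N := leq_trans x0 xy.
elim: n q => [//|n IH] q qa; rewrite !massS_mem //.
have qb a : (0 < a)%N -> admissible (branch q a) by move=> a0; exact: admissible_branch.
have ge0 z k : 0 <= (if k.+1 == z then total_mass (branch q k.+1)
                     else mass n (branch q k.+1) (fun s => z \in s)).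
  by case: ifP => _; [apply: total_mass_ge0 | apply: mass_ge0]; exact: qb.
apply: (@nneseries_le_pair _ _ _ y.-1 x.-1) => // [||k ky kx].
- by rewrite -(inj_eq succn_inj) !prednK // eq_sym.
- rewrite !prednK // eqxx (negbTE nxy) eq_sym (negbTE nxy) eqxx.
  apply: (mass_exchange n _ _ _ _ (qb x x0) (qb y y0)); last exact/IH/qb.
  by move=> t t0; exact: density_branch_le.
- rewrite -(inj_eq succn_inj) prednK // in ky; rewrite -(inj_eq succn_inj) prednK // in kx.
  by rewrite (negbTE ky) (negbTE kx); exact/IH/qb.
Qed.

End Monotonicity.

Local Open Scope ereal_scope.

Definition gauss_dparam {R : realType} : dparam R := DParam (ln 2) (ln 2) 1 0.

Lemma admissible_gauss_dparam {R : realType} : admissible (@gauss_dparam R).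
Proof.
have l2 : (0 < ln (2 : R))%R by rewrite ln_gt0 // ltr1n.
by split => //=; exact: ltW.
Qed.

Lemma gauss_mu_Nge1 {R : realType} n z :
  gauss_mu (@Nge1 R n z) = mass n gauss_dparam (fun s => z \in s).
Proof.
rewrite /gauss_mu Nge1_cylinder_event setIidl; last first.
  by move=> t [[t01 _] _]; rewrite /= in_itv.
rewrite massE; last exact: admissible_gauss_dparam.
apply: eq_integral => w; rewrite inE => -[[/andP[w0 _] _] _].
by rewrite /density /= ger0_norm ?ltW // mul0r addr0 mulr1 mulrDr mulr1.
Qed.

Theorem lemma6 (R : realType) (n : nat) :
  (1 <= n)%N ->
  forall x y : nat, (1 <= x)%N -> (x <= y)%N ->
    gauss_mu (@Nge1 R n y) <= gauss_mu (@Nge1 R n x).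
Proof.
move=> _ x y x1 xy; rewrite !gauss_mu_Nge1.
exact: mass_mem_le admissible_gauss_dparam.
Qed.
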